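(* Consider the deletion-only Qerror function $\mathbb{Q}:2^{R_x}\to\mathbb{R}$, $$\mathbb{Q}(X)=\sum_{j=1}^M \mathbb{Q}_j(X),\qquad \mathbb{Q}_j(X)=\frac{C_j+1}{C_j+1-\sum_{t_i\in X} w_{ij}}.$$ Then $\mathbb{Q}$ is supermodular: for all $A,B\subseteq R_x$, $$\mathbb{Q}(A\cup B)+\mathbb{Q}(A\cap B)\ \ge\ \mathbb{Q}(A)+\mathbb{Q}(B).$$
   Context: Setting: $R_x=\{t_1,\dots,t_N\}$ is a finite set of tuples and there are $M$ queries. The joint weights $w_{ij}\in\mathbb{Z}_{\ge0}$ satisfy $C_j=\sum_{i=1}^N w_{ij}$ for each $j$. For $X\subseteq R_x$, $\mathbb{Q}(X)$ is the total Qerror when exactly the tuples in $X$ are deleted. *)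

From HB Require Import structures.
From mathcomp Require Import all_boot all_order all_algebra.
Set Implicit Arguments. Unset Strict Implicit. Unset Printing Implicit Defensive.
Import Order.TTheory GRing.Theory Num.Theory.
Local Open Scope ring_scope.

(* Tuples t_1..t_N are indexed by 'I_N, queries by 'I_M;
   w i j : nat is the joint weight w_ij in Z_{>=0}. *)

Definition Ccount (N M : nat) (w : 'I_N -> 'I_M -> nat) (j : 'I_M) : nat :=
  (\sum_(i < N) w i j)%N.

Definition Qj (R : realFieldType) (N M : nat) (w : 'I_N -> 'I_M -> nat)
    (j : 'I_M) (X : {set 'I_N}) : R :=
  (Ccount w j).+1%:R / ((Ccount w j).+1%:R - (\sum_(i in X) w i j)%N%:R).

Definition Qerr (R : realFieldType) (N M : nat) (w : 'I_N -> 'I_M -> nat)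
    (X : {set 'I_N}) : R :=
  \sum_(j < M) Qj R w j X.

From HB Require Import structures.
From mathcomp Require Import all_boot all_order all_algebra.
From mathcomp Require Import ring lra.
Import Order.TTheory GRing.Theory Num.Theory.
Local Open Scope ring_scope.

(* Each [Qj] is [(C + 1) / (C + 1 - s)] evaluated at the modular function
   [s(X) = \sum_(i in X) w i j]; since [s |-> 1 / (c - s)] is convex on [s < c],
   spreading a fixed total [s(A) + s(B) = s(A :|: B) + s(A :&: B)] apart can only
   increase the sum of its values. *)

Lemma invB_exchange (R : realFieldType) (c l x y u : R) :
  x + y = u + l -> l <= x -> l <= y -> u < c ->
  (c - x)^-1 + (c - y)^-1 <= (c - u)^-1 + (c - l)^-1.
Proof.
move=> sum_xy lx ly uc.
set p := c - l; set q := c - x; set r := c - y; set t := c - u.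
have t_gt0 : 0 < t by rewrite /t; lra.
have q_gt0 : 0 < q by rewrite /q; lra.
have r_gt0 : 0 < r by rewrite /r; lra.
have p_gt0 : 0 < p by rewrite /p; lra.
have p_def : p = q + r - t by rewrite /p /q /r /t; lra.
have gap : t^-1 + p^-1 - (q^-1 + r^-1) = (q + r) * ((q - t) * (r - t)) / (p * t * q * r).
  by rewrite p_def; field; rewrite -p_def !gt_eqF.
rewrite -subr_ge0 gap; apply: divr_ge0; last by rewrite ltW // !mulr_gt0.
by rewrite !mulr_ge0 // ?subr_ge0 /t /q /r; lra.
Qed.

Lemma big_setUI (R : Type) (idx : R) (aop : Monoid.com_law idx)
    (I : finType) (A B : {set I}) (F : I -> R) :
  aop (\big[aop/idx]_(i in A :|: B) F i) (\big[aop/idx]_(i in A :&: B) F i) =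
  aop (\big[aop/idx]_(i in A) F i) (\big[aop/idx]_(i in B) F i).
Proof.
rewrite !(big_mkcond (fun i => i \in _)) -!big_split /=; apply: eq_bigr => i _.
rewrite in_setU in_setI.
by case: (i \in A); case: (i \in B); rewrite /= ?Monoid.mulm1 ?Monoid.mul1m.
Qed.

Lemma Qj_supermodular (R : realFieldType) (N M : nat) (w : 'I_N -> 'I_M -> nat)
    (j : 'I_M) (A B : {set 'I_N}) :
  Qj R w j A + Qj R w j B <= Qj R w j (A :|: B) + Qj R w j (A :&: B).
Proof.
set C := (Ccount w j).+1%:R : R.
have -> : forall X, Qj R w j X = C * (C - (\sum_(i in X) w i j)%N%:R)^-1 by [].
rewrite -!mulrDr ler_wpM2l //; apply: invB_exchange.
- by rewrite -!natrD big_setUI.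
- by rewrite ler_nat [leqRHS](big_setID B); apply: leq_addr.
- by rewrite ler_nat setIC [leqRHS](big_setID A); apply: leq_addr.
- by rewrite ltr_nat ltnS /Ccount [leqRHS](bigID [in A :|: B]); apply: leq_addr.
Qed.

Theorem theorem4p1 (R : realFieldType) (N M : nat) (w : 'I_N -> 'I_M -> nat)
    (A B : {set 'I_N}) :
  Qerr R w A + Qerr R w B <= Qerr R w (A :|: B) + Qerr R w (A :&: B).
Proof.
by rewrite /Qerr -!big_split ler_sum // => j _; apply: Qj_supermodular.
Qed.
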